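(* Let $R$ be a ring. Then $R$ is a GSWNC ring if and only if for every non-invertible $a \in R$, at least one of $a - a^2$ and $a + a^2$ is nilpotent.
   Context: All rings are associative with identity. An element $a$ of a ring is strongly weakly nil-clean if there exist an idempotent $e$ and a nilpotent $q$ with $eq = qe$ such that $a = q + e$ or $a = q - e$. A ring is GSWNC if every non-invertible element is strongly weakly nil-clean. *)

From mathcomp Require Import all_boot all_algebra.
Set Implicit Arguments. Unset Strict Implicit. Unset Printing Implicit Defensive.
Import GRing.Theory.
Local Open Scope ring_scope.

Definition idempotent_el {R : pzRingType} (e : R) : Prop := e * e = e.
Definition nilpotent_el {R : pzRingType} (q : R) : Prop := exists n : nat, q ^+ n = 0.
Definition invertible_el {R : pzRingType} (a : R) : Prop :=
  exists b : R, a * b = 1 /\ b * a = 1.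

Definition strongly_weakly_nil_clean {R : pzRingType} (a : R) : Prop :=
  exists e q : R, idempotent_el e /\ nilpotent_el q /\ e * q = q * e /\
    (a = q + e \/ a = q - e).

Definition GSWNC (R : pzRingType) : Prop :=
  forall a : R, ~ invertible_el a -> strongly_weakly_nil_clean a.

(* An element a is strongly nil-clean, a = q + e with e idempotent, q nilpotent
   and eq = qe, exactly when a - a^2 is nilpotent.  One direction is the identity
   (q + e) - (q + e)^2 = q (1 - q - 2e).  Conversely, the Newton iteration
   s |-> 3s^2 - 2s^3 squares the defect s - s^2 while keeping s congruent to a
   modulo a - a^2, so after finitely many steps it reaches an idempotent e with
   a - e nilpotent.  Strongly weakly nil-clean means that a or -a is strongly
   nil-clean, and (-a) - (-a)^2 = -(a + a^2). *)

From HB Require Import structures.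
From mathcomp Require Import all_boot all_algebra ring.
Set Implicit Arguments.
Unset Strict Implicit.
Unset Printing Implicit Defensive.

Import GRing.Theory.
Local Open Scope ring_scope.

Definition strongly_nil_clean {R : pzRingType} (a : R) : Prop :=
  exists e q : R, idempotent_el e /\ nilpotent_el q /\ e * q = q * e /\ a = q + e.

Section Nilpotent.
Variable R : pzRingType.
Implicit Types q x : R.

Lemma nilpotentN q : nilpotent_el (- q) <-> nilpotent_el q.
Proof.
suff nilN x : nilpotent_el x -> nilpotent_el (- x) by split=> /nilN; rewrite ?opprK.
by case=> n xn0; exists n; rewrite exprNn xn0 mulr0.
Qed.

Lemma nilpotentM_comm q x :
  GRing.comm q x -> nilpotent_el q -> nilpotent_el (q * x).
Proof. by move=> cqx [n qn0]; exists n; rewrite exprMn_comm // qn0 mul0r. Qed.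

Lemma expr_eq0_leq q m n : (m <= n)%N -> q ^+ m = 0 -> q ^+ n = 0.
Proof. by move=> /subnK <- qm0; rewrite exprD qm0 mulr0. Qed.

End Nilpotent.

Section NilClean.
Variable R : pzRingType.
Implicit Types a e q : R.

Lemma strongly_weakly_nil_cleanE a :
  strongly_weakly_nil_clean a <-> strongly_nil_clean a \/ strongly_nil_clean (- a).
Proof.
split=> [[e [q [ide [nilq [ceq [->|->]]]]]] | [] [e [q [ide [nilq [ceq def_a]]]]]].
- by left; exists e, q.
- by right; exists e, (- q); rewrite nilpotentN mulrN mulNr ceq opprB addrC.
- by exists e, q; do !split=> //; left.
- exists e, (- q); rewrite nilpotentN mulrN mulNr ceq.
  by do !split=> //; right; rewrite -opprD -def_a opprK.
Qed.

Lemma nil_clean_sub_sqr e q : idempotent_el e -> e * q = q * e ->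
  (q + e) - (q + e) ^+ 2 = q * (1 - q - e *+ 2).
Proof.
rewrite /idempotent_el => ide ceq.
rewrite expr2 mulrDl !mulrDr ide mulr1 !mulrN mulrnAr ceq mulr2n !opprD !addrA.
by rewrite [q + e]addrC -!addrA addrC !addrA subrK.
Qed.

Lemma strongly_nil_clean_nilpotent_sub_sqr a :
  strongly_nil_clean a -> nilpotent_el (a - a ^+ 2).
Proof.
case=> e [q [ide [nilq [ceq ->]]]]; rewrite nil_clean_sub_sqr //.
apply: nilpotentM_comm nilq.
apply: commrB; first apply: commrB; [exact: commr1 | exact: commr_refl |].
by apply: commrMn; exact/esym.
Qed.

Lemma addr_sqr_oppE a : a + a ^+ 2 = - (- a - (- a) ^+ 2).
Proof. by rewrite sqrrN opprB opprK addrC. Qed.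

End NilClean.

Section NewtonIdempotent.
Variable R : comPzRingType.

Lemma newton_idempotent_step (s : R) (t := s ^+ 2 * (3 - 2 * s)) :
  t - t ^+ 2 = (s - s ^+ 2) ^+ 2 * ((3 - 2 * s) * (1 + 2 * s)) /\
  s - t = (s - s ^+ 2) * (1 - 2 * s).
Proof. by split; rewrite /t; ring. Qed.

Lemma approx_idempotent (x : R) (k : nat) :
  exists s w v : R,
    s - s ^+ 2 = (x - x ^+ 2) ^+ (2 ^ k) * w /\ x - s = (x - x ^+ 2) * v.
Proof.
set p := x - x ^+ 2.
elim: k => [|k [s [w [v [def_w def_v]]]]].
  by exists x, 1, 0; rewrite expn0 expr1 mulr1 mulr0 subrr.
have [m two_k] : exists m, (2 ^ k = m.+1)%N by exists (2 ^ k).-1; rewrite prednK ?expn_gt0.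
have [idem_step diff_step] := newton_idempotent_step s.
exists (s ^+ 2 * (3 - 2 * s)), (w ^+ 2 * ((3 - 2 * s) * (1 + 2 * s))).
exists (v + p ^+ m * w * (1 - 2 * s)); split.
  by rewrite idem_step def_w expnSr exprM; ring.
have -> : x - s ^+ 2 * (3 - 2 * s) = (x - s) + (s - s ^+ 2) * (1 - 2 * s) by ring.
by rewrite def_v def_w two_k exprS; ring.
Qed.

End NewtonIdempotent.

Section IdempotentLifting.
Variables (R : nzRingType) (a : R).

(* The Newton iteration runs in the commutative ring int[X] and is evaluated
   at a, so everything it produces is a polynomial in a and commutes. *)
Let commr_intr : commr_rmorph intr a. Proof. exact: commr_int. Qed.
Local Notation eval := (horner_morph commr_intr).

Let eval_comm p q : GRing.comm (eval p) (eval q).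
Proof. by rewrite /GRing.comm -!rmorphM mulrC. Qed.

Let eval_sub_sqr : eval ('X - 'X ^+ 2) = a - a ^+ 2.
Proof. by rewrite rmorphB rmorphXn /= horner_morphX. Qed.

Lemma nilpotent_sub_sqr_strongly_nil_clean_nz :
  nilpotent_el (a - a ^+ 2) -> strongly_nil_clean a.
Proof.
case=> n pn0.
have [s [w [v [def_w def_v]]]] := approx_idempotent ('X : {poly int}) n.
exists (eval s), (eval ('X - s)); split; last split; last split.
- have : eval (s - s ^+ 2) = 0.
    have n_le_2n : (n <= 2 ^ n)%N by apply/ltnW/ltn_expl.
    by rewrite def_w rmorphM rmorphXn /= eval_sub_sqr (expr_eq0_leq n_le_2n pn0) mul0r.
  by rewrite rmorphB rmorphXn => /eqP; rewrite subr_eq0 expr2 eq_sym => /eqP.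
- rewrite def_v rmorphM /= eval_sub_sqr; apply: nilpotentM_comm; last by exists n.
  by rewrite -eval_sub_sqr; apply: eval_comm.
- exact: eval_comm.
- by rewrite rmorphB /= horner_morphX subrK.
Qed.

End IdempotentLifting.

Lemma strongly_nil_cleanP (R : pzRingType) (a : R) :
  strongly_nil_clean a <-> nilpotent_el (a - a ^+ 2).
Proof.
split; first exact: strongly_nil_clean_nilpotent_sub_sqr.
(* Polynomial evaluation needs a nontrivial ring, so the zero ring is done by hand. *)
have [R0 _ | R1] := eqVneq (1 : R) 0.
  have a0 : a = 0 by rewrite -[a]mulr1 R0 mulr0.
  exists 0, 0; rewrite /idempotent_el a0 mulr0 addr0.
  by do !split=> //; exists 1%N; rewrite expr1.
pose Rnz := HB.pack_for nzRingType R (GRing.PzSemiRing_isNonZero.Build R R1).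
exact: (@nilpotent_sub_sqr_strongly_nil_clean_nz Rnz).
Qed.

Lemma strongly_weakly_nil_cleanP (R : pzRingType) (a : R) :
  strongly_weakly_nil_clean a <->
  nilpotent_el (a - a ^+ 2) \/ nilpotent_el (a + a ^+ 2).
Proof.
by rewrite strongly_weakly_nil_cleanE !strongly_nil_cleanP addr_sqr_oppE nilpotentN.
Qed.

Theorem proposition2p11 (R : pzRingType) :
  GSWNC R <->
  (forall a : R, ~ invertible_el a ->
     nilpotent_el (a - a ^+ 2) \/ nilpotent_el (a + a ^+ 2)).
Proof. by split=> swnc a /swnc /strongly_weakly_nil_cleanP. Qed.
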